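(* Let $d(z)=\sum_{k\ge0}d_kz^{-k-1}$ be a formal Laurent series and $P(z)=\sum_{\alpha=0}^{m} c_{\alpha,1}z^\alpha$, $Q(z)=\sum_{\alpha=0}^{m} c_{\alpha,0}z^\alpha$ complex polynomials with $c_{m,1}\ne0$, $m\ge1$, $\deg Q<m$. Suppose that the initial data are $\varphi(x,y)=\operatorname{Res}\{d(\xi)(Q(\xi)/P(\xi))^y\xi^x\}$ for $(x,y)\in\mathbb Z_+^2$ with $x<m$ or $y=0$ (with $Q/P$ expanded at $\xi=\infty$). Define $\Phi_k(w)=\sum_{y\ge1}\varphi(k,y)w^{-y-1}$ for $0\le k\le m-1$ and $R_{k+1}(z,w)=z^{-k-1}\sum_{\alpha=k+1}^{m}(c_{\alpha,1}w-c_{\alpha,0})z^\alpha$. Then $$\sum_{k=0}^{m-1}R_{k+1}(z,w)\Phi_k(w)-\frac1w\sum_{\alpha=0}^{m-1}\sum_{x=0}^{\alpha-1}c_{\alpha,0}\,\varphi(x,0)\,z^{\alpha-x-1}=0,$$ so that the generating function of the solution of the Cauchy problem is $\mathcal D(z,w)=\dfrac{P(z)d(z)}{P(z)w-Q(z)}$.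
   Context: $\mathbb Z_+$ denotes the nonnegative integers; $\operatorname{Res}$ of a formal Laurent series in $\xi$ is its coefficient of $\xi^{-1}$. The Cauchy problem is: $\sum_{\alpha=0}^{m} c_{\alpha,1} r(x+\alpha,y+1)-\sum_{\alpha=0}^{m} c_{\alpha,0} r(x+\alpha,y)=0$ for all $x,y\ge0$, and $r(x,y)=\varphi(x,y)$ whenever $x<m$ or $y=0$; $\mathcal D(z,w)=\sum_{(x,y)\in\mathbb Z_+^2}r(x,y)z^{-x-1}w^{-y-1}$. *)

From HB Require Import structures.
From mathcomp Require Import all_boot all_order all_algebra.
Set Implicit Arguments. Unset Strict Implicit. Unset Printing Implicit Defensive.
Import Order.TTheory GRing.Theory Num.Theory.
Local Open Scope ring_scope.

Section Series.
Variable R : comNzRingType.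

(* ---------- one-variable formal power series in xi^{-1} ----------
   a : pser  represents  sum_{n>=0} a n * xi^{-n}  (expansion at xi = oo) *)
Definition pser := nat -> R.
Definition pser_mul (a b : pser) : pser :=
  fun n => \sum_(i < n.+1) a i * b (n - i)%N.
Definition pser_one : pser := fun n => (n == 0%N)%:R.
Fixpoint pser_exp (a : pser) (y : nat) : pser :=
  if y is y'.+1 then pser_mul a (pser_exp a y') else pser_one.
Definition pser_coef (a : pser) (e : int) : R :=
  match e with Posz 0 => a 0%N | Posz _ => 0 | Negz n => a n.+1 end.
(* d(xi) = sum_{k>=0} d_k xi^{-k-1}, as a power series in xi^{-1} *)
Definition pser_of_d (d : nat -> R) : pser :=
  fun n => if n is n'.+1 then d n' else 0.

(* g is the expansion of Q/P at xi = oo : the series g in xi^{-1} with P*g = Q *)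
Definition expansion_at_infty (P Q : {poly R}) (g : pser) : Prop :=
  forall j : int,
    \sum_(a < size P) P`_a * pser_coef g (j - a%:Z)
    = (match j with Posz n => Q`_n | Negz _ => 0 end).

(* Initial data: phi(x,y) = Res { d(xi) (Q(xi)/P(xi))^y xi^x },
   where g is the expansion of Q/P at infinity.
   Res { h(xi) xi^x } = coefficient of xi^{-1-x} in h. *)
Definition phi (d g : nat -> R) (x y : nat) : R :=
  pser_coef (pser_mul (pser_of_d d) (pser_exp g y)) (- 1 - x%:Z).

(* ---------- two-variable formal series ----------
   s : ser2,  s i j = coefficient of z^i w^j  (i j : int) *)
Definition ser2 := int -> int -> R.

(* product of a polynomial p(z,w) by a formal series s(z,w);
   p : {poly {poly R}}, with (p`_b)`_a the coefficient of z^a w^b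
   (outer variable w, inner variable z) *)
Definition pmul2 (p : {poly {poly R}}) (s : ser2) : ser2 :=
  fun i j => \sum_(b < size p) \sum_(a < size (p`_b))
               (p`_b)`_a * s (i - a%:Z) (j - b%:Z).

Definition winv (s : ser2) : ser2 := fun i j => s i (j + 1).

Definition ser2_of_zpoly (p : {poly R}) : ser2 :=
  fun i j => if j == 0 then (match i with Posz n => p`_n | Negz _ => 0 end)
             else 0.

(* d(z) = sum_{k>=0} d_k z^{-k-1} ;  note Negz k = -k-1 *)
Definition dser (d : nat -> R) : ser2 :=
  fun i j => if j == 0 then (match i with Negz k => d k | _ => 0 end) else 0.

(* D(z,w) = sum_{x,y>=0} r(x,y) z^{-x-1} w^{-y-1} *)
Definition Dser (r : nat -> nat -> R) : ser2 :=
  fun i j => match i, j with Negz x, Negz y => r x y | _, _ => 0 end.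

(* Phi_k(w) = sum_{y>=1} phi(k,y) w^{-y-1} *)
Definition Phi (ph : nat -> nat -> R) (k : nat) : ser2 :=
  fun i j => if i == 0 then
               (match j with Negz y => if (1 <= y)%N then ph k y else 0
                           | Posz _ => 0 end)
             else 0.

Definition Ppoly (m : nat) (c1 : nat -> R) : {poly R} := \poly_(a < m.+1) c1 a.
Definition Qpoly (m : nat) (c0 : nat -> R) : {poly R} := \poly_(a < m.+1) c0 a.

(* R_{k+1}(z,w) = z^{-k-1} sum_{a=k+1}^m (c1 a w - c0 a) z^a *)
Definition Rpoly (m : nat) (c1 c0 : nat -> R) (k : nat) : {poly {poly R}} :=
  \sum_(k.+1 <= a < m.+1)
     ('X * (c1 a *: 'X^(a - k.+1))%:P - (c0 a *: 'X^(a - k.+1))%:P).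

Definition Spoly (m : nat) (c0 : nat -> R) (ph : nat -> nat -> R) : {poly R} :=
  \sum_(a < m) \sum_(x < a) (c0 a * ph x 0%N) *: 'X^(a - x - 1).

Definition PwQ (m : nat) (c1 c0 : nat -> R) : {poly {poly R}} :=
  'X * (Ppoly m c1)%:P - (Qpoly m c0)%:P.

Definition cauchy_solution (m : nat) (c1 c0 : nat -> R)
    (ph r : nat -> nat -> R) : Prop :=
  (forall x y : nat,
     \sum_(a < m.+1) c1 a * r (x + a)%N y.+1
     - \sum_(a < m.+1) c0 a * r (x + a)%N y = 0)
  /\ (forall x y : nat, (x < m)%N \/ y = 0%N -> r x y = ph x y).

End Series.

From HB Require Import structures.
From mathcomp Require Import all_boot all_order all_algebra zify.
Import Order.TTheory GRing.Theory Num.Theory.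
Local Open Scope ring_scope.

(* In the variable t = 1/xi the expansion P g = Q at infinity says that
   t^m P(1/t) g(t) and t^m Q(1/t) agree modulo t^(m+1).  Multiplying this
   congruence by H = d g^y, which has no constant term, and reading off the
   coefficient of t^(m-s) gives, for all s and y,
     sum_(s < a <= m) (c1 a phi(a-s-1, y+1) - c0 a phi(a-s-1, y)) = 0.
   Extracting the coefficient of z^i w^j in both identities, every column
   i = s >= 0 reduces to this recurrence (the row j = -1 of the first one also
   brings in the polynomial S), while the columns i < 0 of the second identity
   are the Cauchy recurrence itself and its row j = 0 is phi(x, 0) = d x. *)

Lemma subz_nat (s a : nat) :
  s%:Z - a%:Z = if (s < a)%N then Negz (a - s.+1) else Posz (s - a).
Proof.
case: ltnP => [lt_sa|le_as]; last by rewrite subzn.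
by rewrite -opprB subzn ?(ltnW lt_sa) // NegzE subnSK.
Qed.

Lemma Negz_subn (x a : nat) : Negz x - a%:Z = Negz (x + a).
Proof. by rewrite !NegzE -opprD -PoszD addSn. Qed.

Lemma pser_coef_subn (R : comNzRingType) (g : nat -> R) (s a : nat) :
  pser_coef g (s%:Z - a%:Z) = if (s <= a)%N then g (a - s)%N else 0.
Proof.
rewrite subz_nat; case: (ltngtP s a) => [lt_sa|lt_as|->]; last by rewrite subnn.
- by rewrite /= subnS prednK // subn_gt0.
- by move: lt_as; rewrite -subn_gt0; case: (s - a)%N.
Qed.

Section BigShift.
Variable R : nmodType.

Lemma sum_ord_subn_shift (m s : nat) (F : nat -> nat -> R) :
  \sum_(k < m) (if (s + k < m)%N then F (s + k.+1)%N k else 0)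
  = \sum_(s.+1 <= a < m.+1) F a (a - s.+1)%N.
Proof.
rewrite -[in RHS](add0n s.+1) big_addn big_mkord subSS.
rewrite (big_ord_widen m (fun k => F (k + s.+1)%N (k + s.+1 - s.+1)%N)) ?leq_subr //.
rewrite [RHS]big_mkcond; apply: eq_bigr => k _; rewrite addnK.
by congr (if _ then F _ _ else _); lia.
Qed.

Lemma sum_ord_gtn (n s : nat) (F : nat -> R) :
  \sum_(a < n) (if (s < a)%N then F a else 0) = \sum_(s.+1 <= a < n) F a.
Proof. by rewrite big_geq_mkord -big_mkcond. Qed.

End BigShift.

Section PowerSeries.
Variable R : comNzRingType.
Implicit Types (a : pser R) (d g : nat -> R).

Lemma pser_exp_coef N a y n :
  (n < N)%N -> pser_exp a y n = ((\poly_(i < N) a i) ^+ y)`_n.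
Proof.
elim: y n => [|y IHy] n lt_nN /=; first by rewrite expr0 coef1.
rewrite exprS coefM; apply: eq_bigr => i _.
have lt_iN : (i < N)%N by apply: leq_ltn_trans lt_nN; rewrite -ltnS.
by rewrite coef_poly lt_iN IHy // (leq_ltn_trans (leq_subr _ _)).
Qed.

Lemma phi_coef N d g x y : (x < N)%N ->
  phi d g x y = (\poly_(i < N.+1) pser_of_d d i * (\poly_(i < N.+1) g i) ^+ y)`_x.+1.
Proof.
move=> lt_xN; rewrite /phi (_ : -1 - x%:Z = Negz x); last by rewrite NegzE intS opprD.
rewrite /= coefM; apply: eq_bigr => i _.
have lt_ix := ltn_ord i.
by rewrite coef_poly ifT ?(@pser_exp_coef N.+1) //; lia.
Qed.

Lemma phi0 d g x : phi d g x 0 = d x.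
Proof. by rewrite (@phi_coef x.+1) // expr0 mulr1 coef_poly ltnSn. Qed.

End PowerSeries.

Section ResidueRecurrence.
Variable R : comNzRingType.

(* t^m c(1/t), for c of degree at most m. *)
Definition reciprocal (m : nat) (c : nat -> R) : {poly R} := \poly_(i < m.+1) c (m - i)%N.

Lemma coef_reciprocalM m c (X : {poly R}) s : (s <= m)%N ->
  (reciprocal m c * X)`_(m - s) = \sum_(s <= a < m.+1) c a * X`_(a - s).
Proof.
move=> le_sm; rewrite coefM big_rev_mkord subSn //.
apply: eq_bigr => k _; have lt_k := ltn_ord k.
by rewrite coef_poly ifT; [congr (c _ * X`_ _) | ]; lia.
Qed.

Lemma coefM_eq0_le (A B : {poly R}) N :
  (forall n, (n <= N)%N -> A`_n = 0) -> forall n, (n <= N)%N -> (A * B)`_n = 0.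
Proof.
move=> A_low n le_nN; rewrite coefM big1 // => i _.
by rewrite A_low ?mul0r // (leq_trans _ le_nN) // -ltnS.
Qed.

Variables (m : nat) (c1 c0 g : nat -> R).
Hypotheses (c1m_neq0 : c1 m != 0)
           (expansion_g : expansion_at_infty (Ppoly m c1) (Qpoly m c0) g).

(* Only the coefficients of g up to t^(m+1) are ever read. *)
Let G := \poly_(i < m.+2) g i.

Lemma coef_reciprocal_expansion_low n : (n <= m)%N ->
  (reciprocal m c1 * G - reciprocal m c0)`_n = 0.
Proof.
move=> le_nm; rewrite -(subKn le_nm); set s := (m - n)%N.
have le_sm : (s <= m)%N by apply: leq_subr.
have := expansion_g (Posz s); rewrite /Ppoly size_poly_eq // /Qpoly !coef_poly ltnS le_sm.
rewrite coefB coef_reciprocalM // coef_poly ltnS leq_subr subKn // => <-.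
apply/eqP; rewrite subr_eq0 big_geq_mkord big_mkcond; apply/eqP/eq_bigr => a _ /=.
have lt_am := ltn_ord a.
rewrite pser_coef_subn !coef_poly lt_am; case: ifP; rewrite ?mulr0 // => _.
by rewrite ifT //; lia.
Qed.

Lemma reciprocal_expansion_residue (H : {poly R}) s : H`_0 = 0 ->
  \sum_(s.+1 <= a < m.+1) (c1 a * (G * H)`_(a - s) - c0 a * H`_(a - s)) = 0.
Proof.
move=> H0; have [le_sm | lt_ms] := leqP s m; last by rewrite big_geq // ltnS ltnW.
have GH0 : (G * H)`_0 = 0 by rewrite coefM big_ord1 H0 mulr0.
transitivity (\sum_(s <= a < m.+1) (c1 a * (G * H)`_(a - s) - c0 a * H`_(a - s))).
  by rewrite [RHS]big_ltn ?ltnS // subnn GH0 H0 !mulr0 subrr add0r.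
rewrite sumrB -!coef_reciprocalM // mulrA -coefB -mulrBl.
exact: coefM_eq0_le coef_reciprocal_expansion_low _ (leq_subr _ _).
Qed.

Lemma phi_recurrence d s y :
  \sum_(s.+1 <= a < m.+1)
     (c1 a * phi d g (a - s.+1) y.+1 - c0 a * phi d g (a - s.+1) y) = 0.
Proof.
pose D := \poly_(i < m.+2) pser_of_d d i.
rewrite -[RHS](@reciprocal_expansion_residue (D * G ^+ y) s); last first.
  by rewrite coefM big_ord1 coef_poly mul0r.
apply: eq_big_nat => a /andP [lt_sa le_am].
have le_asm : (a - s <= m.+1)%N by lia.
by rewrite !(@phi_coef R m.+1) ?subnSK // exprS -/D -/G mulrCA.
Qed.

End ResidueRecurrence.

Section TwoVariableProducts.
Variable R : comNzRingType.
Implicit Types (A B : {poly R}) (S : ser2 R).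

Lemma pmul2E (p : {poly {poly R}}) S (nb na : nat) i j :
  (size p <= nb)%N -> (forall b : nat, leq (size p`_b) na) ->
  pmul2 p S i j = \sum_(b < nb) \sum_(a < na) (p`_b)`_a * S (i - a%:Z) (j - b%:Z).
Proof.
move=> le_p le_pb; rewrite /pmul2.
rewrite (big_ord_widen nb
  (fun b => \sum_(a < size p`_b) (p`_b)`_a * S (i - a%:Z) (j - b%:Z)) le_p) big_mkcond.
apply: eq_bigr => b _.
rewrite (big_ord_widen na (fun a => (p`_b)`_a * S (i - a%:Z) (j - b%:Z)) (le_pb b)).
rewrite big_mkcond.
case: ltnP => [_|le_pb']; last first.
  by rewrite big1 // => a _; rewrite (nth_default 0 le_pb') coef0 mul0r.
by apply: eq_bigr => a _; case: ltnP => // le_pba; rewrite nth_default ?mul0r.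
Qed.

Lemma coef_linw A B b :
  ('X * A%:P - B%:P)`_b = if b == 0%N then - B else if b == 1%N then A else 0.
Proof. by rewrite coefB coefXM !coefC; case: b => [|[|b]]; rewrite /= ?subrr ?sub0r ?subr0. Qed.

Lemma pmul2_linw A B (n : nat) S i j : (size A <= n)%N -> (size B <= n)%N ->
  pmul2 ('X * A%:P - B%:P) S i j
  = \sum_(a < n) (A`_a * S (i - a%:Z) (j - 1) - B`_a * S (i - a%:Z) j).
Proof.
move=> le_An le_Bn; rewrite (@pmul2E _ _ 2 n).
- rewrite big_ord_recl big_ord1 !coef_linw /= addrC sumrB subr0 -sumrN.
  by congr (_ + _); apply: eq_bigr => a _; rewrite coefN mulNr.
- by apply/leq_sizeP => -[|[|b]] //; rewrite coef_linw.
- move=> b; rewrite coef_linw; case: ifP => _; first by rewrite size_polyN.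
  by case: ifP; rewrite ?size_poly0.
Qed.

Lemma pmul2_polyC A (n : nat) S i j : (size A <= n)%N ->
  pmul2 A%:P S i j = \sum_(a < n) A`_a * S (i - a%:Z) j.
Proof.
move=> le_An; rewrite (@pmul2E _ _ 1 n) ?size_polyC_leq1 // => [|b].
  by rewrite big_ord1 coefC subr0.
by rewrite coefC; case: ifP; rewrite ?size_poly0.
Qed.

Lemma pmul2_linw_at0 A B S i j : (forall i j, i != 0 -> S i j = 0) ->
  pmul2 ('X * A%:P - B%:P) S i j
  = if i is Posz s then A`_s * S 0 (j - 1) - B`_s * S 0 j else 0.
Proof.
move=> S_off; case: i => [s|x].
  have lt_s : (s < (size A + size B + s).+1)%N by lia.
  rewrite (@pmul2_linw _ _ (size A + size B + s).+1); [|lia|lia].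
  rewrite (bigD1 (Ordinal lt_s)) //= subrr big1 ?addr0 // => a /eqP neq_as.
  have nz : s%:Z - a%:Z != 0.
    by rewrite subr_eq0 eqz_nat eq_sym; apply/eqP=> eq_as; apply/neq_as/val_inj.
  by rewrite !S_off ?mulr0 ?subrr.
rewrite (@pmul2_linw _ _ (size A + size B)) ?leq_addl ?leq_addr //.
by rewrite big1 // => a _; rewrite Negz_subn !S_off ?mulr0 ?subrr.
Qed.

End TwoVariableProducts.

Section CoefficientPolynomials.
Variable R : comNzRingType.
Implicit Types (c : nat -> R) (ph : nat -> nat -> R).

Lemma sum_drop_poly_shift m c k :
  \sum_(k.+1 <= a < m.+1) c a *: 'X^(a - k.+1) = drop_poly k.+1 (\poly_(a < m.+1) c a).
Proof.
apply/polyP => t; rewrite coef_drop_poly coef_poly coef_sum -{1 2}[k.+1]add0n big_addn.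
rewrite add0n big_mkord subSS (_ : (t + k.+1 < m.+1) = (t < m - k))%N; last by lia.
transitivity (\sum_(a < m - k | a == t :> nat) c (a + k.+1)%N).
  rewrite [RHS]big_mkcond; apply: eq_bigr => a _.
  by rewrite addnK coefZ coefXn eq_sym; case: eqP; rewrite ?mulr0 ?mulr1.
by rewrite (big_ord1_eq _ (fun a => c (a + k.+1)%N)).
Qed.

Lemma Rpoly_drop m c1 c0 k : Rpoly m c1 c0 k
  = 'X * (drop_poly k.+1 (Ppoly m c1))%:P - (drop_poly k.+1 (Qpoly m c0))%:P.
Proof. by rewrite /Rpoly sumrB -mulr_sumr -!rmorph_sum !sum_drop_poly_shift. Qed.

Lemma Phi_off ph k i j : i != 0 -> Phi ph k i j = 0.
Proof. by rewrite /Phi => /negbTE ->. Qed.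

Lemma sum_pmul2_Rpoly_Phi m c1 c0 ph s j :
  \sum_(k < m) pmul2 (Rpoly m c1 c0 k) (Phi ph k) (Posz s) j
  = \sum_(s.+1 <= a < m.+1)
      (c1 a * Phi ph (a - s.+1) 0 (j - 1) - c0 a * Phi ph (a - s.+1) 0 j).
Proof.
rewrite -(@sum_ord_subn_shift _ m s (fun a k => c1 a * Phi ph k 0 (j - 1) - c0 a * Phi ph k 0 j)).
apply: eq_bigr => k _; rewrite Rpoly_drop pmul2_linw_at0; last exact: Phi_off.
rewrite !coef_drop_poly !coef_poly addnS ltnS -addnS.
by case: ifP; rewrite ?mul0r ?subrr.
Qed.

Lemma coef_Spoly m c0 ph s : c0 m = 0 ->
  (Spoly m c0 ph)`_s = \sum_(s.+1 <= a < m.+1) c0 a * ph (a - s.+1)%N 0%N.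
Proof.
move=> c0m; rewrite coef_sum -sum_ord_gtn big_ord_recr /= c0m mul0r if_same addr0.
apply: eq_bigr => a _; rewrite coef_sum; have lt_am := ltn_ord a.
case: ltnP => [lt_sa | le_as].
  transitivity (\sum_(x < a | x == (a - s.+1)%N :> nat) c0 a * ph x 0%N).
    rewrite [RHS]big_mkcond; apply: eq_bigr => x _; have lt_xa := ltn_ord x.
    rewrite coefZ coefXn (_ : (s == a - x - 1)%N = (x == a - s.+1 :> nat)%N :> bool); last lia.
    by case: eqP; rewrite ?mulr0 ?mulr1.
  by rewrite (big_ord1_eq _ (fun x => c0 a * ph x 0%N)) ifT //; lia.
rewrite big1 // => x _; have lt_xa := ltn_ord x.
by rewrite coefZ coefXn (_ : (s == a - x - 1)%N = false) ?mulr0 //; lia.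
Qed.

End CoefficientPolynomials.

Section GeneratingFunction.
Variable R : comNzRingType.
Variables (m : nat) (c1 c0 d g : nat -> R).
Hypotheses (c1m_neq0 : c1 m != 0) (c0m : c0 m = 0)
           (expansion_g : expansion_at_infty (Ppoly m c1) (Qpoly m c0) g).

Lemma Rpoly_Phi_identity i j :
  \sum_(k < m) pmul2 (Rpoly m c1 c0 k) (Phi (phi d g) k) i j
  - winv (ser2_of_zpoly (Spoly m c0 (phi d g))) i j = 0.
Proof.
rewrite /winv /ser2_of_zpoly; case: i => [s|x]; last first.
  rewrite if_same subr0 big1 // => k _.
  by rewrite Rpoly_drop pmul2_linw_at0 //; apply: Phi_off.
rewrite sum_pmul2_Rpoly_Phi; case: j => [J|[|y]].
- rewrite (_ : Posz J + 1 == 0 = false) ?subr0; last by rewrite -[1]/(Posz 1) -PoszD eqz_nat addn1.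
  rewrite big1 // => a _; case: J => [|J]; by rewrite /Phi /= !mulr0 subrr.
- rewrite /= coef_Spoly // -sumrB.
  rewrite -[RHS](@phi_recurrence R m c1 c0 g c1m_neq0 expansion_g d s 0).
  by apply: eq_big_nat => a _; rewrite Negz_subn /Phi /= mulr0 subr0.
- rewrite (_ : Negz y.+1 + 1 == 0 = false) ?subr0; last by rewrite NegzE.
  rewrite -[RHS](@phi_recurrence R m c1 c0 g c1m_neq0 expansion_g d s y.+1).
  by apply: eq_big_nat => a _; rewrite Negz_subn addn1.
Qed.

Lemma PwQ_Dser_identity r : cauchy_solution m c1 c0 (phi d g) r ->
  forall i j, pmul2 (PwQ m c1 c0) (Dser r) i j = pmul2 (Ppoly m c1)%:P (dser d) i j.
Proof.
move=> [recurrence initial] i j.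
rewrite /PwQ (@pmul2_linw _ _ _ m.+1) ?size_poly // (@pmul2_polyC _ _ m.+1) ?size_poly //.
have coef_PQ (a : 'I_m.+1) : (Ppoly m c1)`_a = c1 a /\ (Qpoly m c0)`_a = c0 a.
  by rewrite !coef_poly ltn_ord.
case: j => [[|J]|y].
- rewrite (_ : Posz 0 - 1 = Negz 0) //; apply: eq_bigr => a _; have [-> ->] := coef_PQ a.
  case: (i - a%:Z) => [n|x]; rewrite /Dser /dser /= ?mulr0 ?subr0 //.
  by rewrite initial ?phi0 //; right.
- rewrite (_ : Posz J.+1 - 1 = Posz J); last by rewrite -[1]/(Posz 1) subz_nat /= subSS subn0.
  rewrite !big1 // => a _; rewrite /Dser /dser /=; first by rewrite mulr0.
  by case: (i - a%:Z) => [n|x]; rewrite ?mulr0 ?subr0.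
- rewrite [RHS]big1 => [|a _]; last by rewrite /dser /= mulr0.
  rewrite Negz_subn addn1; case: i => [s|x].
  + rewrite -[RHS](@phi_recurrence R m c1 c0 g c1m_neq0 expansion_g d s y) -sum_ord_gtn.
    apply: eq_bigr => a _; have [-> ->] := coef_PQ a; have lt_am := ltn_ord a.
    rewrite subz_nat; case: ltnP => [lt_sa|_]; last by rewrite /Dser !mulr0 subrr.
    by rewrite /Dser !initial //; left; lia.
  + rewrite -[RHS](recurrence x y) -sumrB; apply: eq_bigr => a _.
    by have [-> ->] := coef_PQ a; rewrite Negz_subn.
Qed.

End GeneratingFunction.

Theorem mainTheorem4 (R : numClosedFieldType) (m : nat)
    (c1 c0 d g : nat -> R) :
  (1 <= m)%N -> c1 m != 0 -> (size (Qpoly m c0) <= m)%N ->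
  expansion_at_infty (Ppoly m c1) (Qpoly m c0) g ->
  (forall i j : int,
     \sum_(k < m) pmul2 (Rpoly m c1 c0 k) (Phi (phi d g) k) i j
     - winv (ser2_of_zpoly (Spoly m c0 (phi d g))) i j = 0)
  /\ (forall r : nat -> nat -> R, cauchy_solution m c1 c0 (phi d g) r ->
      forall i j : int,
        pmul2 (PwQ m c1 c0) (Dser r) i j
        = pmul2 (Ppoly m c1)%:P (dser d) i j).
Proof.
move=> _ c1m_neq0 size_Q expansion_g.
have c0m : c0 m = 0 by rewrite -(nth_default 0 size_Q) coef_poly ltnSn.
split; first exact: Rpoly_Phi_identity.
exact: PwQ_Dser_identity.
Qed.
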